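(* For $i\in\{1,2\}$ let $\mathcal{R}_i=(X_i,\Phi_i,\check X_i,\check\Phi_i)$ be a semisimple root datum, $\mathcal{T}_i=(T_i,\emptyset,\check T_i,\emptyset)$ a torus, $A_i$ a finite $\mathbb{Z}$-module with surjections $h_i:X_i\to A_i$ (with $\Phi_i\subseteq\ker h_i$) and $f_i:T_i\to A_i$, and let $\mathcal{R}_i'=\mathcal{R}_i\oplus_{(A_i,h_i,f_i)}\mathcal{T}_i=(B_i,\Phi_i',\check B_i,\check\Phi_i')$. If $\zeta:\mathcal{R}_1'\to\mathcal{R}_2'$ is a $p$-morphism (with $\zeta:B_1\to B_2$), then there exist $p$-morphisms $\zeta_1:\mathcal{R}_1\to\mathcal{R}_2$ (with $\zeta_1:X_1\to X_2$) and $\zeta_2:\mathcal{T}_1\to\mathcal{T}_2$ (with $\zeta_2:T_1\to T_2$) and a group homomorphism $\zeta_3:A_1\to A_2$ such that (a) $\zeta=(\zeta_1\oplus\zeta_2)|_{B_1}$; (b) $\zeta_3\circ h_1=h_2\circ\zeta_1$; (c) $\zeta_3\circ f_1=f_2\circ\zeta_2$. In particular $\zeta_1(\ker h_1)\subseteq\ker h_2$. If $\zeta$ is an isomorphism then so are $\zeta_1,\zeta_2,\zeta_3$, and $\zeta_1(\ker h_1)=\ker h_2$.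
   Context: Root data are reduced quadruples $(X,\Phi,\check X,\check\Phi)$ with perfect pairing; torus = no roots; semisimple means $\mathbb{Q}\Phi=\mathbb{Q}\otimes X$. Fix $p\ge0$ (a prime or $0$). Here a $p$-morphism written $\mathcal{R}\to\mathcal{R}'$ with $\mathcal{R}=(X,\Phi,\dots)$, $\mathcal{R}'=(X',\Phi',\dots)$ means a $\mathbb{Z}$-linear map $g:X\to X'$ together with a function $q:\Phi'\to\{p^n:n\ge0\}$ ($q\equiv1$ if $p=0$) and a bijection $\tau:\Phi'\to\Phi$ with $g(\tau(\alpha))=q(\alpha)\alpha$ and $\check g(\check\alpha)=q(\alpha)\tau(\alpha)^\vee$ for all $\alpha\in\Phi'$, where $\check g:\check X'\to\check X$ is the transpose. Central product $\mathcal{R}\oplus_{(A,h,f)}\mathcal{T}$: the root datum induced from the direct sum $\mathcal{R}\oplus\mathcal{T}$ by the submodule $X\oplus_A T=\{(x,t)\in X\oplus T: h(x)=f(t)\}$, i.e. with lattice $X\oplus_A T$, roots $\{(\alpha,0):\alpha\in\Phi\}$, dual lattice $\mathrm{Hom}(X\oplus_A T,\mathbb{Z})$ and coroots the restrictions of $(\check\alpha,0)$. *)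

From HB Require Import structures.
From mathcomp Require Import all_boot all_order all_algebra.
Set Implicit Arguments. Unset Strict Implicit. Unset Printing Implicit Defensive.
Import Order.TTheory GRing.Theory Num.Theory.
Local Open Scope ring_scope.

(* A (pre-)root datum, living inside an ambient Z-module V (in practice a
   subgroup of some Z^k, hence free of finite rank):
   - rd_lat   : the lattice X, as a subgroup of V;
   - rd_roots : the finite set of roots Phi (duplicate-free list);
   - rd_cor   : rd_cor a x = <x, a^vee>, the coroot of the root a, as an
                element of Hom(X, Z) (only its values on X matter).
   The dual lattice is taken to be Hom(X,Z) itself (perfect pairing). *)
Record rdatum (V : zmodType) := RD {
  rd_lat : pred V;
  rd_roots : seq V;
  rd_cor : V -> V -> int }.

Section RD.
Variables (V : zmodType).

Definition is_root_datum (R : rdatum V) : Prop :=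
  let L := rd_lat R in let Phi := rd_roots R in let c := rd_cor R in
  [/\ (0 \in L) /\ (forall x y, x \in L -> y \in L -> x - y \in L),
      uniq Phi /\ {subset Phi <= L},
      (forall a, a \in Phi -> forall x y, x \in L -> y \in L ->
           c a (x - y) = c a x - c a y)
      /\ (forall a, a \in Phi -> c a a = 2),
      (forall a b, a \in Phi -> b \in Phi -> b - a *~ c a b \in Phi)
      (* dual reflections preserve the coroots *)
      /\ (forall a b, a \in Phi -> b \in Phi -> exists2 g, g \in Phi &
             forall x, x \in L -> c g x = c b x - c b a * c a x) &
      (forall a b, a \in Phi -> b \in Phi ->
          (forall x, x \in L -> c a x = c b x) -> a = b) ].

Definition reduced_rd (R : rdatum V) : Prop :=
  forall a, a \in rd_roots R -> a *+ 2 \notin rd_roots R.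

(* Q Phi = Q (x) X *)
Definition semisimple_rd (R : rdatum V) : Prop :=
  forall x, x \in rd_lat R -> exists k : nat, (0 < k)%N /\
    exists cf : V -> int, x *+ k = \sum_(a <- rd_roots R) a *~ cf a.

Definition torus_rd (R : rdatum V) : Prop := rd_roots R = [::].

Definition full_lattice (R : rdatum V) : Prop := forall x, x \in rd_lat R.
End RD.

Definition cprod (V W : zmodType) (A : zmodType) (R : rdatum V) (T : rdatum W)
   (h : V -> A) (f : W -> A) : rdatum (V * W)%type :=
  @RD (V * W)%type
    [pred b : (V * W)%type | [&& b.1 \in rd_lat R, b.2 \in rd_lat T & h b.1 == f b.2]]
    (map (fun a => (a, 0)) (rd_roots R))
    (fun b y => rd_cor R b.1 y.1).

Definition ppow (p q : nat) : Prop :=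
  if p == 0%N then q = 1%N else exists e, q = (p ^ e)%N.

Definition p_morphism (p : nat) (V V' : zmodType) (R : rdatum V) (R' : rdatum V')
   (g : V -> V') (q : V' -> nat) (tau : V' -> V) : Prop :=
  let L := rd_lat R in let L' := rd_lat R' in
  let Phi := rd_roots R in let Phi' := rd_roots R' in
  (forall x y, x \in L -> y \in L -> g (x - y) = g x - g y) /\
  (forall x, x \in L -> g x \in L') /\
  (forall a, a \in Phi' -> ppow p (q a)) /\
  (forall a, a \in Phi' -> tau a \in Phi) /\
  (forall a b, a \in Phi' -> b \in Phi' -> tau a = tau b -> a = b) /\
  (forall b, b \in Phi -> exists2 a, a \in Phi' & tau a = b) /\
  (forall a, a \in Phi' -> g (tau a) = a *+ q a) /\
  (forall a, a \in Phi' -> forall x, x \in L ->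
      rd_cor R' a (g x) = rd_cor R (tau a) x *+ q a).

Definition p_iso (p : nat) (V V' : zmodType) (R : rdatum V) (R' : rdatum V')
   (g : V -> V') (q : V' -> nat) (tau : V' -> V) : Prop :=
  p_morphism p R R' g q tau /\
  (forall x y, x \in rd_lat R -> y \in rd_lat R -> g x = g y -> x = y) /\
  (forall y, y \in rd_lat R' -> exists2 x, x \in rd_lat R & g x = y) /\
  (forall a, a \in rd_roots R' -> q a = 1%N).

(* Along z, coroots of R2 pull back to multiples of coroots of R1, which
   vanish on the torus part 0 * ker f1 of B1; since the coroots of a semisimple datum
   separate points (reindexing sums over the roots by the reflections yields a
   positive definite invariant form), z maps 0 * ker f1 into 0 * T2.  Dually, some
   multiple of any x in ker h1 is a sum of roots, and z sends the roots (a, 0) to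
   multiples of roots (b, 0), so z maps ker h1 * 0 into X2 * 0.  Hence the first
   component of z (x, t) depends only on x and the second only on t, which defines
   zeta1 and zeta2, and zeta3 is induced on A1 = h1 X1.  For an isomorphism z, the
   same semisimplicity argument in R1 and in R2 gives injectivity of zeta1 and
   zeta2, and surjectivity is inherited from z. *)

From HB Require Import structures.
From mathcomp Require Import all_boot all_order all_algebra ring.
Import GRing.Theory.
Local Open Scope ring_scope.
Import Order.TTheory Num.Theory.
Set Implicit Arguments. Unset Strict Implicit.

Section AdditiveOnSubgroup.
Variables (U W : zmodType) (B : {pred U}) (f : U -> W).
Hypothesis Bsub : zmod_closed B.
Hypothesis fB : {in B &, {morph f : x y / x - y}}.

Lemma closedB x y : x \in B -> y \in B -> x - y \in B.
Proof. exact: Bsub.2. Qed.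

Lemma closedD x y : x \in B -> y \in B -> x + y \in B.
Proof. exact: (GRing.zmod_closedD Bsub).2. Qed.

Lemma closedMn x k : x \in B -> x *+ k \in B.
Proof.
by case: Bsub => B0 _ Bx; elim: k => [|k IH]; rewrite ?mulr0n // mulrS closedD.
Qed.

Lemma closedMz x k : x \in B -> x *~ k \in B.
Proof.
move=> Bx; case: k => k; first exact: closedMn.
by rewrite NegzE mulrNz (GRing.zmod_closedN Bsub) // closedMn.
Qed.

Lemma closed_sum (I : eqType) (s : seq I) (F : I -> U) :
  {in s, forall i, F i \in B} -> \sum_(i <- s) F i \in B.
Proof.
case: Bsub => B0 _ sB; rewrite big_seq.
by apply: (big_ind (fun x => x \in B)) => //; exact: closedD.
Qed.

Lemma morph_in0 : f 0 = 0.
Proof. by case: Bsub => B0 _; have := fB B0 B0; rewrite subrr => ->; rewrite subrr. Qed.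

Lemma morph_inN x : x \in B -> f (- x) = - f x.
Proof. by case: Bsub => B0 _ Bx; rewrite -sub0r fB // morph_in0 sub0r. Qed.

Lemma morph_inD x y : x \in B -> y \in B -> f (x + y) = f x + f y.
Proof.
move=> Bx By; have BNy := GRing.zmod_closedN Bsub By.
by rewrite -[y]opprK fB // morph_inN ?opprK.
Qed.

Lemma morph_inMn x k : x \in B -> f (x *+ k) = f x *+ k.
Proof.
move=> Bx; elim: k => [|k IH]; first by rewrite !mulr0n morph_in0.
by rewrite !mulrS morph_inD ?closedMn // IH.
Qed.

Lemma morph_inMz x k : x \in B -> f (x *~ k) = f x *~ k.
Proof.
move=> Bx; case: k => k; first exact: morph_inMn.
by rewrite NegzE !mulrNz morph_inN ?closedMn // morph_inMn.
Qed.

Lemma morph_in_sum (I : eqType) (s : seq I) (F : I -> U) :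
  {in s, forall i, F i \in B} -> f (\sum_(i <- s) F i) = \sum_(i <- s) f (F i).
Proof.
elim: s => [|i s IH] sB; first by rewrite !big_nil morph_in0.
have sB' : {in s, forall j, F j \in B} by move=> j sj; rewrite sB // in_cons sj orbT.
by rewrite !big_cons morph_inD ?sB ?mem_head ?closed_sum // IH.
Qed.
End AdditiveOnSubgroup.

Section Additive.
Variables (U W : zmodType) (f : U -> W).
Hypothesis fB : {morph f : x y / x - y}.

Let predT_closed : zmod_closed (@predT U). Proof. by []. Qed.
Let fBT : {in predT &, {morph f : x y / x - y}}. Proof. exact: in2W. Qed.

Lemma morphB0 : f 0 = 0.
Proof. exact: morph_in0 predT_closed fBT. Qed.

Lemma morphBD x y : f (x + y) = f x + f y.
Proof. exact: (morph_inD predT_closed fBT). Qed.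

Lemma morphBMn x k : f (x *+ k) = f x *+ k.
Proof. exact: (morph_inMn predT_closed fBT). Qed.

Lemma morphBMz x k : f (x *~ k) = f x *~ k.
Proof. exact: (morph_inMz predT_closed fBT). Qed.

Lemma morphB_sum (I : eqType) (s : seq I) (F : I -> U) :
  f (\sum_(i <- s) F i) = \sum_(i <- s) f (F i).
Proof. by apply: (morph_in_sum predT_closed fBT). Qed.
End Additive.

Lemma morphD_B (U W : zmodType) (f : U -> W) :
  {morph f : x y / x + y} -> {morph f : x y / x - y}.
Proof. by move=> fD x y; apply/eqP; rewrite eq_sym subr_eq -fD subrK. Qed.

Lemma row_int_torsion_free m (v : 'rV[int]_m) k : (0 < k)%N -> v *+ k = 0 -> v = 0.
Proof.
move=> k_gt0 /rowP vk0; apply/rowP => j; have /eqP := vk0 j.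
by rewrite mulmxnE !mxE mulrn_eq0 gt_eqF // => /eqP.
Qed.

Section CorootNondegeneracy.
Variables (n : nat) (R : rdatum 'rV[int]_n).
Hypotheses (Rrd : is_root_datum R) (Rfull : full_lattice R) (Rss : semisimple_rd R).
Local Notation V := 'rV[int]_n.
Local Notation Phi := (rd_roots R).
Local Notation c := (rd_cor R).

Lemma corB a : a \in Phi -> {morph c a : x y / x - y}.
Proof. by case: Rrd => _ _ [cB _] _ _ Phia x y; apply: cB. Qed.

Lemma cor_root a : a \in Phi -> c a a = 2.
Proof. by case: Rrd => _ _ [_ caa] _ _; apply: caa. Qed.

Definition reflection a b := b - a *~ c a b.

Lemma cor_reflection a v : a \in Phi -> c a (reflection a v) = - c a v.
Proof.
move=> Phia; rewrite /reflection corB // (morphBMz (corB Phia)) cor_root //.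
by rewrite -mulrzr intz; ring.
Qed.

Lemma reflectionK a : a \in Phi -> involutive (reflection a).
Proof.
by move=> Phia v; rewrite {1}/reflection cor_reflection // mulrNz /reflection opprK subrK.
Qed.

Lemma perm_reflection a : a \in Phi -> perm_eq (map (reflection a) Phi) Phi.
Proof.
case: Rrd => _ [uPhi _] _ [reflP _] _ Phia.
have uPhi' : uniq (map (reflection a) Phi).
  by rewrite (map_inj_uniq (inv_inj (reflectionK Phia))).
have subPhi : {subset map (reflection a) Phi <= Phi}.
  by move=> _ /mapP [b Phib ->]; apply: reflP.
have [|_ eqPhi] := uniq_min_size uPhi' subPhi; first by rewrite size_map.
exact: uniq_perm.
Qed.

Definition root_norm a : rat := \sum_(b <- Phi) (c a b)%:~R ^+ 2.

Lemma root_norm_gt0 a : a \in Phi -> 0 < root_norm a.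
Proof.
case: Rrd => _ [uPhi _] _ _ _ Phia; rewrite /root_norm (bigD1_seq a) //= cor_root //.
by apply: ltr_pwDl => //; apply: sumr_ge0 => b _; apply: sqr_ge0.
Qed.

(* Reindex the sum by the reflection [s_a], which permutes [Phi] and negates [c a]. *)
Lemma mul_root_norm (u : V -> rat) a : {morph u : x y / x - y} -> a \in Phi ->
  u a * root_norm a = (\sum_(b <- Phi) u b * (c a b)%:~R) *+ 2.
Proof.
move=> uB Phia; set S := \sum_(b <- Phi) _.
suff SE : S = - S + u a * root_norm a by rewrite mulr2n {1}SE; ring.
rewrite {1}/S -(perm_big _ (perm_reflection Phia)) big_map /root_norm mulr_sumr.
rewrite -sumrN -big_split /=; apply: eq_bigr => b _.
by rewrite cor_reflection // /reflection uB (morphBMz uB) rmorphN /= -mulrzr; ring.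
Qed.

Definition root_form (e : V -> int) (v : V) : rat :=
  \sum_(a <- Phi) (e a)%:~R * 2 / root_norm a * (c a v)%:~R.

Lemma root_formB e : {morph root_form e : x y / x - y}.
Proof.
move=> x y; rewrite /root_form -sumrB big_seq [RHS]big_seq; apply: eq_bigr => a Phia.
by rewrite corB // rmorphB mulrBr.
Qed.

Lemma root_form_expansion (e : V -> int) (u : V -> rat) y k :
  {morph u : x y / x - y} -> y *+ k = \sum_(a <- Phi) a *~ e a ->
  u y *+ k = \sum_(b <- Phi) u b * root_form e b.
Proof.
move=> uB yk; rewrite -(morphBMn uB) yk (morphB_sum uB).
under [RHS]eq_bigr do rewrite mulr_sumr.
rewrite exchange_big /= big_seq [RHS]big_seq; apply: eq_bigr => a Phia.
have Na_neq0 : root_norm a != 0 by rewrite gt_eqF // root_norm_gt0.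
rewrite (morphBMz uB) -mulrzr -[u a](mulfK Na_neq0) mul_root_norm //.
under eq_bigr do rewrite mulrCA.
by rewrite -mulr_sumr mulr2n; field.
Qed.

(* [u := root_form e] gives [\sum_b (root_form e b)^2 = 0]; then a coordinate
   function [u] gives [y *+ k = 0]. *)
Lemma coroots_nondegenerate y : {in Phi, forall b, c b y = 0} -> y = 0.
Proof.
move=> cy0; have [k [k_gt0 [e yk]]] := Rss (Rfull y).
have formy0 : root_form e y = 0.
  by rewrite /root_form big_seq big1 // => a Phia; rewrite cy0 // mulr0.
have form0 : {in Phi, forall b, root_form e b = 0}.
  move=> b Phib; have /esym/eqP := root_form_expansion (root_formB e) yk.
  rewrite formy0 mul0rn psumr_eq0 => [/allP/(_ b Phib)/=|i _].
    by rewrite mulf_eq0 orbb => /eqP.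
  by rewrite -expr2 sqr_ge0.
apply/rowP => j; pose u (v : V) : rat := (v 0 j)%:~R.
have uB : {morph u : x y / x - y} by move=> v w; rewrite /u !mxE rmorphB.
have := root_form_expansion uB yk; rewrite big_seq big1 => [/eqP|b Phib].
  by rewrite mulrn_eq0 gt_eqF //= intr_eq0 mxE => /eqP.
by rewrite form0 // mulr0.
Qed.
End CorootNondegeneracy.

Section OntoInverse.
Variables (T : choiceType) (A : eqType) (f : T -> A).
Hypothesis f_onto : forall a, exists x, f x = a.

Let f_onto_eq a : exists x, f x == a.
Proof. by have [x <-] := f_onto a; exists x. Qed.

Definition onto_inv a : T := xchoose (f_onto_eq a).

Lemma onto_invK : cancel onto_inv f.
Proof. by move=> a; apply/eqP; exact: (xchooseP (f_onto_eq a)). Qed.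
End OntoInverse.

Lemma injB0 (U W : zmodType) (f : U -> W) : {morph f : x y / x - y} ->
  (forall x, f x = 0 -> x = 0) -> injective f.
Proof.
by move=> fB f0 x y fxy; apply/eqP; rewrite -subr_eq0; apply/eqP/f0; rewrite fB fxy subrr.
Qed.

Section PairProjections.
Variables (U W : zmodType).
Implicit Types (u v : U * W) (k : nat).

Lemma pairB (x y : U) (s t : W) : (x, s) - (y, t) = (x - y, s - t). Proof. by []. Qed.
Lemma fstB u v : (u - v).1 = u.1 - v.1. Proof. by []. Qed.
Lemma sndB u v : (u - v).2 = u.2 - v.2. Proof. by []. Qed.

Lemma fstMn u k : (u *+ k).1 = u.1 *+ k. Proof. exact: raddfMn. Qed.
Lemma sndMn u k : (u *+ k).2 = u.2 *+ k. Proof. exact: raddfMn. Qed.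
Lemma fstMz u (k : int) : (u *~ k).1 = u.1 *~ k. Proof. exact: raddfMz. Qed.
Lemma sndMz u (k : int) : (u *~ k).2 = u.2 *~ k. Proof. exact: raddfMz. Qed.
Lemma fst_sum (I : Type) (s : seq I) (F : I -> U * W) :
  (\sum_(i <- s) F i).1 = \sum_(i <- s) (F i).1.
Proof. exact: raddf_sum. Qed.
Lemma snd_sum (I : Type) (s : seq I) (F : I -> U * W) :
  (\sum_(i <- s) F i).2 = \sum_(i <- s) (F i).2.
Proof. exact: raddf_sum. Qed.
End PairProjections.

Section CentralProductLattice.
Variables (V W A : zmodType) (R : rdatum V) (T : rdatum W) (h : V -> A) (f : W -> A).

Lemma mem_cprod_roots b :
  (b \in rd_roots (cprod R T h f)) = (b.2 == 0) && (b.1 \in rd_roots R).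
Proof.
apply/mapP/andP => [[a Phia ->] | [/eqP b2 Phib1]] //; exists b.1 => //.
by case: b b2 {Phib1} => x t /= ->.
Qed.

Hypotheses (Rfull : full_lattice R) (Tfull : full_lattice T).

Lemma mem_cprod_lat b : (b \in rd_lat (cprod R T h f)) = (h b.1 == f b.2).
Proof. by rewrite inE /= Rfull Tfull. Qed.

Lemma cprod_lat_closed : {morph h : x y / x - y} -> {morph f : x y / x - y} ->
  zmod_closed (rd_lat (cprod R T h f)).
Proof.
move=> hB fB; split; first by rewrite mem_cprod_lat /= (morphB0 hB) (morphB0 fB).
by move=> b c; rewrite !mem_cprod_lat /= hB fB => /eqP-> /eqP->.
Qed.
End CentralProductLattice.

Section CentralProductMorphism.
Variables (p n1 n2 m1 m2 : nat).
Local Notation V1 := 'rV[int]_n1.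
Local Notation V2 := 'rV[int]_n2.
Local Notation W1 := 'rV[int]_m1.
Local Notation W2 := 'rV[int]_m2.
Variables (R1 : rdatum V1) (R2 : rdatum V2) (T1 : rdatum W1) (T2 : rdatum W2).
Variables (A1 A2 : zmodType) (h1 : V1 -> A1) (h2 : V2 -> A2) (f1 : W1 -> A1) (f2 : W2 -> A2).
Variables (z : V1 * W1 -> V2 * W2) (zq : V2 * W2 -> nat) (ztau : V2 * W2 -> V1 * W1).
Hypothesis zmorph : p_morphism p (cprod R1 T1 h1 f1) (cprod R2 T2 h2 f2) z zq ztau.
Hypotheses (R1rd : is_root_datum R1) (R2rd : is_root_datum R2).
Hypotheses (R1full : full_lattice R1) (R2full : full_lattice R2).
Hypotheses (T1full : full_lattice T1) (T2full : full_lattice T2).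
Hypotheses (R1ss : semisimple_rd R1) (R2ss : semisimple_rd R2).
Hypotheses (T1tor : torus_rd T1) (T2tor : torus_rd T2).
Hypotheses (h1D : {morph h1 : x y / x + y}) (h2D : {morph h2 : x y / x + y}).
Hypotheses (f1D : {morph f1 : x y / x + y}) (f2D : {morph f2 : x y / x + y}).
Hypotheses (h1_onto : forall a, exists x, h1 x = a) (f1_onto : forall a, exists t, f1 t = a).
Hypotheses (h1_roots : {in rd_roots R1, forall a, h1 a = 0}).

Local Notation B1 := (rd_lat (cprod R1 T1 h1 f1)).
Local Notation B2 := (rd_lat (cprod R2 T2 h2 f2)).

Let h1B := morphD_B h1D.
Let h2B := morphD_B h2D.
Let f1B := morphD_B f1D.
Let f2B := morphD_B f2D.
Let memB1 := mem_cprod_lat h1 f1 R1full T1full.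
Let memB2 := mem_cprod_lat h2 f2 R2full T2full.
Let B1closed := cprod_lat_closed R1full T1full h1B f1B.

Let zB : {in B1 &, {morph z : x y / x - y}}. Proof. by case: zmorph. Qed.

Let zB2 b : b \in B1 -> z b \in B2. Proof. by case: zmorph => _ [zL _]; apply: zL. Qed.

Let ztau_roots b : b \in rd_roots R2 ->
  (ztau (b, 0)).2 = 0 /\ (ztau (b, 0)).1 \in rd_roots R1.
Proof.
move=> Phib; have [_ [_ [_ [+ _]]]] := zmorph.
by move=> /(_ (b, 0)); rewrite !mem_cprod_roots eqxx Phib => /(_ isT) /andP [/eqP].
Qed.

Let Phi2 b : b \in rd_roots R2 -> (b, 0) \in rd_roots (cprod R2 T2 h2 f2).
Proof. by move=> Phib; rewrite mem_cprod_roots eqxx. Qed.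

Let ztauE b : b \in rd_roots R2 -> ztau (b, 0) = ((ztau (b, 0)).1, 0).
Proof. by move=> Phib; rewrite [LHS]surjective_pairing (ztau_roots Phib).1. Qed.

Lemma z_torus_fst t : f1 t = 0 -> (z (0, t)).1 = 0.
Proof.
move=> ft0; apply: (coroots_nondegenerate R2rd R2full R2ss) => b Phib.
have [_ [_ [_ [_ [_ [_ [_ zcor]]]]]]] := zmorph.
have B1t : (0, t) \in B1 by rewrite memB1 /= ft0 (morphB0 h1B).
have := zcor _ (Phi2 Phib) _ B1t => /= ->.
by rewrite (morphB0 (corB R1rd R1full (ztau_roots Phib).2)) mul0rn.
Qed.

Let cprod_root_in b : b \in rd_roots R1 -> (b, 0) \in B1.
Proof. by move=> Phib; rewrite memB1 /= h1_roots // (morphB0 f1B). Qed.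

Let ztau_root_in b : b \in rd_roots R2 -> ztau (b, 0) \in B1.
Proof. by move=> Phib; rewrite ztauE // cprod_root_in // (ztau_roots Phib).2. Qed.

Lemma z_root_snd a : a \in rd_roots R1 -> (z (a, 0)).2 = 0.
Proof.
move=> Phia; have [_ [_ [_ [_ [_ [ztau_onto [zroot _]]]]]]] := zmorph.
have Phia' : (a, 0) \in rd_roots (cprod R1 T1 h1 f1) by rewrite mem_cprod_roots eqxx.
have [b Phib <-] := ztau_onto _ Phia'.
have b2 : b.2 = 0 by move: Phib; rewrite mem_cprod_roots => /andP [/eqP].
by rewrite zroot // sndMn b2 mul0rn.
Qed.

Lemma z_ker_snd x : h1 x = 0 -> (z (x, 0)).2 = 0.
Proof.
move=> hx0; have [k [k_gt0 [e xk]]] := R1ss (R1full x).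
have xk' : (x, 0 : W1) *+ k = \sum_(a <- rd_roots R1) (a, 0 : W1) *~ e a.
  apply: injective_projections.
    by rewrite fstMn fst_sum /= xk; apply: eq_bigr => a _; rewrite fstMz.
  by rewrite sndMn snd_sum /= mul0rn big1 // => a _; rewrite sndMz mul0rz.
have B1x : (x, 0) \in B1 by rewrite memB1 /= hx0 (morphB0 f1B).
apply: (row_int_torsion_free k_gt0).
rewrite -sndMn -(morph_inMn B1closed zB) // xk' (morph_in_sum B1closed zB).
  rewrite snd_sum big_seq big1 // => a Phia.
  by rewrite (morph_inMz B1closed zB) ?cprod_root_in // sndMz z_root_snd // mul0rz.
by move=> a Phia; rewrite (closedMz B1closed) ?cprod_root_in.
Qed.

Definition zeta1 x := (z (x, onto_inv f1_onto (h1 x))).1.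
Definition zeta2 t := (z (onto_inv h1_onto (f1 t), t)).2.
Definition zeta3 a := h2 (zeta1 (onto_inv h1_onto a)).

Let lift1_in x : (x, onto_inv f1_onto (h1 x)) \in B1.
Proof. by rewrite memB1 onto_invK. Qed.

Let lift2_in t : (onto_inv h1_onto (f1 t), t) \in B1.
Proof. by rewrite memB1 onto_invK. Qed.

(* Two lifts of [x] (resp. [t]) to [B1] differ by an element of [0 * ker f1]
   (resp. [ker h1 * 0]), on which [z] has zero first (resp. second) component. *)
Lemma z_split b : b \in B1 -> z b = (zeta1 b.1, zeta2 b.2).
Proof.
case: b => x t B1b; apply: injective_projections => /=.
  have /z_torus_fst : f1 (t - onto_inv f1_onto (h1 x)) = 0.
    by move: B1b; rewrite memB1 f1B onto_invK => /eqP->; rewrite subrr.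
  have -> : (0, t - onto_inv f1_onto (h1 x)) = (x, t) - (x, onto_inv f1_onto (h1 x)).
    by rewrite pairB subrr.
  by rewrite zB // => /eqP; rewrite fstB subr_eq0 => /eqP.
have /z_ker_snd : h1 (x - onto_inv h1_onto (f1 t)) = 0.
  by move: B1b; rewrite memB1 h1B onto_invK => /eqP->; rewrite subrr.
have -> : (x - onto_inv h1_onto (f1 t), 0) = (x, t) - (onto_inv h1_onto (f1 t), t).
  by rewrite pairB subrr.
by rewrite zB // => /eqP; rewrite sndB subr_eq0 => /eqP.
Qed.

Lemma zeta1B : {morph zeta1 : x y / x - y}.
Proof.
move=> x y; have := zB (lift1_in x) (lift1_in y).
by rewrite !z_split ?(closedB B1closed) // => /(congr1 fst).
Qed.

Lemma zeta2B : {morph zeta2 : x y / x - y}.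
Proof.
move=> s t; have := zB (lift2_in s) (lift2_in t).
by rewrite !z_split ?(closedB B1closed) // => /(congr1 snd).
Qed.

Lemma h2_zeta1_f2_zeta2 b : b \in B1 -> h2 (zeta1 b.1) = f2 (zeta2 b.2).
Proof. by move=> B1b; have := zB2 B1b; rewrite z_split // memB2 => /eqP. Qed.

Lemma h2_zeta1_ker x : h1 x = 0 -> h2 (zeta1 x) = 0.
Proof.
move=> hx0; have B1x : (x, 0) \in B1 by rewrite memB1 hx0 (morphB0 f1B).
by rewrite (h2_zeta1_f2_zeta2 B1x) (morphB0 zeta2B) (morphB0 f2B).
Qed.

Lemma zeta3_h1 x : zeta3 (h1 x) = h2 (zeta1 x).
Proof.
apply/eqP; rewrite -subr_eq0 -h2B -zeta1B h2_zeta1_ker //.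
by rewrite h1B onto_invK subrr.
Qed.

Lemma zeta3_f1 t : zeta3 (f1 t) = f2 (zeta2 t).
Proof. by rewrite -(onto_invK h1_onto (f1 t)) zeta3_h1 (h2_zeta1_f2_zeta2 (lift2_in t)). Qed.

Lemma zeta3D : {morph zeta3 : a b / a + b}.
Proof.
move=> a b; rewrite -(onto_invK h1_onto a) -(onto_invK h1_onto b) -h1D !zeta3_h1.
by rewrite (morphBD zeta1B) h2D.
Qed.

Lemma zeta1_morphism :
  p_morphism p R1 R2 zeta1 (fun b => zq (b, 0)) (fun b => (ztau (b, 0)).1).
Proof.
have [_ [_ [zq_pow [_ [ztau_inj [ztau_onto [zroot zcor]]]]]]] := zmorph.
split; first by move=> x y _ _; apply: zeta1B.
split; first by move=> x _; apply: R2full.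
split; first by move=> a Phia; apply: zq_pow; apply: Phi2.
split; first by move=> a Phia; exact: (ztau_roots Phia).2.
split.
  move=> a b Phia Phib tauab; apply: (congr1 fst (ztau_inj _ _ (Phi2 Phia) (Phi2 Phib) _)).
  by rewrite ztauE // [RHS]ztauE // tauab.
split.
  move=> a Phia; have := ztau_onto (a, 0); rewrite mem_cprod_roots eqxx Phia.
  case=> // b; rewrite mem_cprod_roots => /andP [/eqP b2 Phib] tauba; exists b.1 => //.
  by rewrite -b2 -surjective_pairing tauba.
split.
  move=> a Phia; have Phia1 : (ztau (a, 0)).1 \in rd_roots R1 := (ztau_roots Phia).2.
  have := congr1 fst (zroot _ (Phi2 Phia)).
  by rewrite ztauE // z_split ?cprod_root_in // fstMn.
by move=> a Phia x _; apply: (zcor _ (Phi2 Phia) _ (lift1_in x)).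
Qed.

Lemma zeta2_morphism : p_morphism p T1 T2 zeta2 (fun _ => 1%N) (fun _ => 0).
Proof.
rewrite /p_morphism T1tor T2tor.
split; first by move=> s t _ _; apply: zeta2B.
split; first by move=> t _; apply: T2full.
by do !split => //; move=> ?; rewrite in_nil.
Qed.

Section Isomorphism.
Hypothesis ziso : p_iso p (cprod R1 T1 h1 f1) (cprod R2 T2 h2 f2) z zq ztau.
Hypotheses (h2_onto : forall a, exists y, h2 y = a) (f2_onto : forall a, exists t, f2 t = a).

Let zinj : {in B1 &, injective z}. Proof. by case: ziso => _ []. Qed.

Lemma zeta_onto y t : h2 y = f2 t -> exists2 b, b \in B1 & zeta1 b.1 = y /\ zeta2 b.2 = t.
Proof.
move=> hyt; have [_ [_ [zonto _]]] := ziso.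
have B2yt : (y, t) \in B2 by rewrite memB2 hyt.
have [b B1b zb] := zonto _ B2yt.
by exists b => //; move: zb; rewrite z_split // => -[].
Qed.

Let z_ztau b : b \in rd_roots R2 -> z (ztau (b, 0)) = (b, 0).
Proof.
move=> Phib; have [[_ [_ [_ [_ [_ [_ [zroot _]]]]]]] [_ [_ zq1]]] := ziso.
by rewrite zroot ?Phi2 // zq1 ?Phi2.
Qed.

Lemma zeta1_inj : injective zeta1.
Proof.
apply: (injB0 zeta1B) => x zx0; have [k [k_gt0 [e xk]]] := R1ss (R1full x).
have B1xk : (x *+ k, 0) \in B1.
  rewrite memB1 xk (morphB_sum h1B) big_seq big1 ?(morphB0 f1B) // => a Phia.
  by rewrite (morphBMz h1B) h1_roots // mul0rz.
have : z (x *+ k, 0) = z 0.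
  rewrite z_split // (morph_in0 B1closed zB) (morphBMn zeta1B) zx0 mul0rn.
  by rewrite (morphB0 zeta2B).
move=> /(zinj B1xk B1closed.1) /(congr1 fst) /=.
exact: row_int_torsion_free.
Qed.

Lemma zeta2_inj : injective zeta2.
Proof.
apply: (injB0 zeta2B) => t zt0; set x := onto_inv h1_onto (f1 t).
have B1xt : (x, t) \in B1 := lift2_in t.
have hx0 : h2 (zeta1 x) = 0.
  by rewrite (h2_zeta1_f2_zeta2 B1xt) /= zt0 (morphB0 f2B).
have [k [k_gt0 [e xk]]] := R2ss (R2full (zeta1 x)).
pose c : V1 * W1 := \sum_(b <- rd_roots R2) ztau (b, 0) *~ e b.
have B1c : c \in B1.
  by apply: closed_sum => // b Phib; apply: closedMz => //; exact: ztau_root_in.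
have zc : z c = z ((x, t) *+ k).
  rewrite (morph_inMn B1closed zB) // (z_split B1xt) /c.
  rewrite (morph_in_sum B1closed zB); last first.
    by move=> b Phib; apply: closedMz => //; exact: ztau_root_in.
  apply: injective_projections.
    rewrite fst_sum fstMn /= xk; apply: eq_big_seq => b Phib.
    by rewrite (morph_inMz B1closed zB) ?ztau_root_in // z_ztau // fstMz.
  rewrite snd_sum sndMn /= zt0 mul0rn big_seq big1 // => b Phib.
  by rewrite (morph_inMz B1closed zB) ?ztau_root_in // z_ztau // sndMz mul0rz.
have /(congr1 snd) := zinj B1c (closedMn B1closed _ B1xt) zc.
rewrite /c snd_sum sndMn big_seq big1 => [/esym|b Phib]; first exact: row_int_torsion_free.
by rewrite sndMz (ztau_roots Phib).1 mul0rz.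
Qed.

Lemma zeta3_inj : injective zeta3.
Proof.
apply: (injB0 (morphD_B zeta3D)) => a; have [x <-] := h1_onto a; rewrite zeta3_h1 => hx0.
have /zeta_onto [b B1b [/zeta1_inj b1 b2]] : h2 (zeta1 x) = f2 0 by rewrite hx0 (morphB0 f2B).
move: b2; rewrite -(morphB0 zeta2B) => /zeta2_inj b2.
by move: B1b; rewrite memB1 b1 b2 (morphB0 f1B) => /eqP.
Qed.

Lemma zeta1_onto y : exists x, zeta1 x = y.
Proof.
have [t /esym/zeta_onto [b _ [b1 _]]] := f2_onto (h2 y).
by exists b.1.
Qed.

Lemma zeta2_onto t : exists s, zeta2 s = t.
Proof.
have [y /zeta_onto [b _ [_ b2]]] := h2_onto (f2 t).
by exists b.2.
Qed.

Lemma zeta3_onto a : exists b, zeta3 b = a.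
Proof.
have [y <-] := h2_onto a; have [x <-] := zeta1_onto y.
by exists (h1 x); rewrite zeta3_h1.
Qed.

Lemma zeta1_iso : p_iso p R1 R2 zeta1 (fun b => zq (b, 0)) (fun b => (ztau (b, 0)).1).
Proof.
have [_ [_ [_ zq1]]] := ziso.
split; first exact: zeta1_morphism.
split; first by move=> x y _ _; apply: zeta1_inj.
split; last by move=> a Phia; rewrite zq1 ?Phi2.
by move=> y _; have [x <-] := zeta1_onto y; exists x.
Qed.

Lemma zeta2_iso : p_iso p T1 T2 zeta2 (fun _ => 1%N) (fun _ => 0).
Proof.
split; first exact: zeta2_morphism.
split; first by move=> s t _ _; apply: zeta2_inj.
split; first by move=> t _; have [s <-] := zeta2_onto t; exists s.
by rewrite T2tor.
Qed.

Lemma zeta3_bij : bijective zeta3.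
Proof.
exists (onto_inv zeta3_onto); last exact: onto_invK.
by move=> a; apply: zeta3_inj; rewrite onto_invK.
Qed.

Lemma ker_h2_zeta1 y : h2 y = 0 <-> exists x, h1 x = 0 /\ zeta1 x = y.
Proof.
split=> [hy0 | [x [hx0 <-]]]; last exact: h2_zeta1_ker.
have [x zx] := zeta1_onto y; exists x; split=> //.
apply: zeta3_inj; rewrite zeta3_h1 zx hy0 -(morphB0 h1B) zeta3_h1.
by rewrite (morphB0 zeta1B) (morphB0 h2B).
Qed.
End Isomorphism.
End CentralProductMorphism.

Theorem mainTheorem8 (p : nat) (hp : p = 0%N \/ prime p)
  (n1 n2 m1 m2 : nat)
  (R1 : rdatum 'rV[int]_n1) (R2 : rdatum 'rV[int]_n2)
  (T1 : rdatum 'rV[int]_m1) (T2 : rdatum 'rV[int]_m2)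
  (A1 A2 : finZmodType)
  (h1 : 'rV[int]_n1 -> A1) (h2 : 'rV[int]_n2 -> A2)
  (f1 : 'rV[int]_m1 -> A1) (f2 : 'rV[int]_m2 -> A2)
  (hR1 : is_root_datum R1 /\ full_lattice R1 /\ reduced_rd R1 /\ semisimple_rd R1)
  (hR2 : is_root_datum R2 /\ full_lattice R2 /\ reduced_rd R2 /\ semisimple_rd R2)
  (hT1 : is_root_datum T1 /\ full_lattice T1 /\ torus_rd T1)
  (hT2 : is_root_datum T2 /\ full_lattice T2 /\ torus_rd T2)
  (hh1 : (forall x y, h1 (x + y) = h1 x + h1 y) /\ (forall a, exists x, h1 x = a)
         /\ (forall a, a \in rd_roots R1 -> h1 a = 0))
  (hh2 : (forall x y, h2 (x + y) = h2 x + h2 y) /\ (forall a, exists x, h2 x = a)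
         /\ (forall a, a \in rd_roots R2 -> h2 a = 0))
  (hf1 : (forall x y, f1 (x + y) = f1 x + f1 y) /\ (forall a, exists t, f1 t = a))
  (hf2 : (forall x y, f2 (x + y) = f2 x + f2 y) /\ (forall a, exists t, f2 t = a))
  (z : ('rV[int]_n1 * 'rV[int]_m1)%type -> ('rV[int]_n2 * 'rV[int]_m2)%type)
  (zq : ('rV[int]_n2 * 'rV[int]_m2)%type -> nat)
  (ztau : ('rV[int]_n2 * 'rV[int]_m2)%type -> ('rV[int]_n1 * 'rV[int]_m1)%type)
  (hz : p_morphism p (cprod R1 T1 h1 f1) (cprod R2 T2 h2 f2) z zq ztau) :
  exists (g1 : 'rV[int]_n1 -> 'rV[int]_n2) (q1 : 'rV[int]_n2 -> nat)
         (tau1 : 'rV[int]_n2 -> 'rV[int]_n1)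
         (g2 : 'rV[int]_m1 -> 'rV[int]_m2) (q2 : 'rV[int]_m2 -> nat)
         (tau2 : 'rV[int]_m2 -> 'rV[int]_m1)
         (z3 : A1 -> A2),
    [/\ p_morphism p R1 R2 g1 q1 tau1,
        p_morphism p T1 T2 g2 q2 tau2,
        (forall a b, z3 (a + b) = z3 a + z3 b),
        (forall b, b \in rd_lat (cprod R1 T1 h1 f1) -> z b = (g1 b.1, g2 b.2)) &
        [/\ (forall x, z3 (h1 x) = h2 (g1 x)),
            (forall t, z3 (f1 t) = f2 (g2 t)),
            (forall x, h1 x = 0 -> h2 (g1 x) = 0) &
            (p_iso p (cprod R1 T1 h1 f1) (cprod R2 T2 h2 f2) z zq ztau ->
               [/\ p_iso p R1 R2 g1 q1 tau1, p_iso p T1 T2 g2 q2 tau2,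
                   bijective z3 &
                   (forall y, h2 y = 0 <-> exists x, h1 x = 0 /\ g1 x = y)])]].
Proof.
case: hR1 => R1rd [R1full [_ R1ss]]; case: hR2 => R2rd [R2full [_ R2ss]].
case: hT1 => _ [T1full T1tor]; case: hT2 => _ [T2full T2tor].
case: hh1 => h1D [h1_onto h1_roots]; case: hh2 => h2D [h2_onto _].
case: hf1 => f1D f1_onto; case: hf2 => f2D f2_onto.
exists (zeta1 h1 z f1_onto), (fun b => zq (b, 0)), (fun b => (ztau (b, 0)).1).
exists (zeta2 f1 z h1_onto), (fun _ => 1%N), (fun _ => 0), (zeta3 h2 z h1_onto f1_onto).
split; [exact: (zeta1_morphism hz) | exact: (zeta2_morphism hz) |
        exact: (zeta3D hz) | exact: (z_split hz) |].
split; [exact: (zeta3_h1 hz) | exact: (zeta3_f1 hz) | exact: (h2_zeta1_ker hz) |].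
move=> ziso; split; [exact: (zeta1_iso hz) | exact: (zeta2_iso hz) |
                     exact: (zeta3_bij hz) | exact: (ker_h2_zeta1 hz)].
Qed.
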